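(* Let $M$ be a Riemannian manifold with retraction $R$, let $f:M\to\mathbb{R}$ be smooth, and let $0<c_1<c_2<1/2$. Let $(x_k,\eta_k,\alpha_k)$ be generated by the scaled Fletcher–Reeves conjugate gradient method described in the context, and assume $\operatorname{grad} f(x_k)\neq 0$ for all $k$. Then for every $k\ge 0$, $\eta_k$ is a descent direction and \[ -\frac{1}{1-c_2}\le \frac{\langle \operatorname{grad} f(x_k),\eta_k\rangle_{x_k}}{\|\operatorname{grad} f(x_k)\|_{x_k}^2}\le \frac{2c_2-1}{1-c_2}. \]
   Context: A retraction on $M$ is a smooth map $R:TM\to M$ with $R_x(0_x)=x$ and $\mathrm{D}R_x(0_x)=\mathrm{id}_{T_xM}$, where $R_x=R|_{T_xM}$. The differentiated retraction is $\mathcal{T}^R_{\eta}(\xi):=\mathrm{D}R_x(\eta)[\xi]\in T_{R_x(\eta)}M$ for $\eta,\xi\in T_xM$. The associated scaled vector transport is $\mathcal{T}^0_{\eta}(\xi):=\dfrac{\|\xi\|_x}{\|\mathcal{T}^R_\eta(\xi)\|_{R_x(\eta)}}\mathcal{T}^R_\eta(\xi)$. Strong Wolfe conditions for $\alpha_k>0$ at $(x_k,\eta_k)$ with constants $c_1,c_2$: $f(R_{x_k}(\alpha_k\eta_k))\le f(x_k)+c_1\alpha_k\langle \operatorname{grad} f(x_k),\eta_k\rangle_{x_k}$ and $|\langle \operatorname{grad} f(R_{x_k}(\alpha_k\eta_k)),\mathcal{T}^R_{\alpha_k\eta_k}(\eta_k)\rangle_{R_{x_k}(\alpha_k\eta_k)}|\le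 c_2|\langle \operatorname{grad} f(x_k),\eta_k\rangle_{x_k}|$. Scaled Fletcher–Reeves method: choose $x_0\in M$, set $\eta_0=-\operatorname{grad} f(x_0)$; for $k=0,1,2,\dots$: choose $\alpha_k>0$ satisfying the strong Wolfe conditions with $0<c_1<c_2<1/2$, set $x_{k+1}=R_{x_k}(\alpha_k\eta_k)$, $\beta_{k+1}=\|\operatorname{grad} f(x_{k+1})\|^2_{x_{k+1}}/\|\operatorname{grad} f(x_k)\|^2_{x_k}$, and $\eta_{k+1}=-\operatorname{grad} f(x_{k+1})+\beta_{k+1}\mathcal{T}^{(k)}_{\alpha_k\eta_k}(\eta_k)$, where $\mathcal{T}^{(k)}_{\alpha_k\eta_k}(\eta_k)=\mathcal{T}^R_{\alpha_k\eta_k}(\eta_k)$ if $\|\mathcal{T}^R_{\alpha_k\eta_k}(\eta_k)\|_{x_{k+1}}\le\|\eta_k\|_{x_k}$, and $\mathcal{T}^{(k)}_{\alpha_k\eta_k}(\eta_k)=\mathcal{T}^0_{\alpha_k\eta_k}(\eta_k)$ otherwise. *)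

From Stdlib Require Import Reals.
Open Scope R_scope.
Set Implicit Arguments.

Record RiemMfd := {
  pt : Type;
  tv : pt -> Type;
  tzero : forall x, tv x;
  tadd : forall x, tv x -> tv x -> tv x;
  tscal : forall x, R -> tv x -> tv x;
  tinner : forall x, tv x -> tv x -> R;
  tadd_assoc : forall x (u v w : tv x), tadd u (tadd v w) = tadd (tadd u v) w;
  tadd_comm : forall x (u v : tv x), tadd u v = tadd v u;
  tadd_zero : forall x (u : tv x), tadd u (tzero x) = u;
  tadd_opp : forall x (u : tv x), tadd u (tscal (-1) u) = tzero x;
  tscal_one : forall x (u : tv x), tscal 1 u = u;
  tscal_assoc : forall x a b (u : tv x), tscal a (tscal b u) = tscal (a * b) u;
  tscal_addv : forall x a (u v : tv x), tscal a (tadd u v) = tadd (tscal a u) (tscal a v);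
  tscal_adds : forall x a b (u : tv x), tscal (a + b) u = tadd (tscal a u) (tscal b u);
  tinner_sym : forall x (u v : tv x), tinner u v = tinner v u;
  tinner_add : forall x (u v w : tv x), tinner (tadd u v) w = tinner u w + tinner v w;
  tinner_scal : forall x a (u v : tv x), tinner (tscal a u) v = a * tinner u v;
  tinner_pos : forall x (u : tv x), u <> tzero x -> 0 < tinner u u
}.

Arguments tzero {_} x.
Arguments tadd {_ x}.
Arguments tscal {_ x}.
Arguments tinner {_ x}.

Definition tnorm {M : RiemMfd} {x : pt M} (u : tv M x) : R := sqrt (tinner u u).

(* A retraction R : TM -> M together with its differential
   DR_x(eta)[xi] (the differentiated retraction T^R_eta(xi)). *)
Record Retraction (M : RiemMfd) := {
  retr : forall x : pt M, tv M x -> pt M;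
  dretr : forall (x : pt M) (eta : tv M x), tv M x -> tv M (retr x eta);
  retr_zero : forall x, retr x (tzero x) = x;
  dretr_add : forall x eta (u v : tv M x), dretr x eta (tadd u v) = tadd (dretr x eta u) (dretr x eta v);
  dretr_scal : forall x eta a (u : tv M x), dretr x eta (tscal a u) = tscal a (dretr x eta u);
  dretr_zero : forall x (xi : tv M x),
      eq_rect (retr x (tzero x)) (tv M) (dretr x (tzero x) xi) x (retr_zero x) = xi
}.

Arguments retr {_} _ x.
Arguments dretr {_} _ x.

(* g is the Riemannian gradient of f: for every x and xi in T_x M,
   d/dt f(R_x(t xi)) at t=0 equals <g x, xi>_x (= Df(x)[xi], since DR_x(0)=id). *)
Definition is_riem_grad (M : RiemMfd) (Rt : Retraction M) (f : pt M -> R)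
  (g : forall x, tv M x) : Prop :=
  forall (x : pt M) (xi : tv M x),
    derivable_pt_lim (fun t => f (retr Rt x (tscal t xi))) 0 (tinner (g x) xi).

Definition sfr_transport (M : RiemMfd) (Rt : Retraction M) (x : pt M)
  (a : R) (eta : tv M x) : tv M (retr Rt x (tscal a eta)) :=
  let TR := dretr Rt x (tscal a eta) eta in
  if Rle_dec (tnorm TR) (tnorm eta) then TR
  else tscal (tnorm eta / tnorm TR) TR.

Definition strong_wolfe (M : RiemMfd) (Rt : Retraction M) (f : pt M -> R)
  (g : forall x, tv M x) (c1 c2 : R) (x : pt M) (eta : tv M x) (a : R) : Prop :=
  f (retr Rt x (tscal a eta)) <= f x + c1 * a * tinner (g x) eta /\
  Rabs (tinner (g (retr Rt x (tscal a eta))) (dretr Rt x (tscal a eta) eta))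
    <= c2 * Rabs (tinner (g x) eta).

Definition sfr_sequence (M : RiemMfd) (Rt : Retraction M) (f : pt M -> R)
  (g : forall x, tv M x) (c1 c2 : R)
  (xs : nat -> pt M) (etas : forall k, tv M (xs k)) (alphas : nat -> R) : Prop :=
  etas 0%nat = tscal (-1) (g (xs 0%nat)) /\
  forall k : nat,
    0 < alphas k /\
    strong_wolfe Rt f g c1 c2 (xs k) (etas k) (alphas k) /\
    exists hx : xs (S k) = retr Rt (xs k) (tscal (alphas k) (etas k)),
      etas (S k) =
        eq_rect_r (tv M)
          (let beta := tinner (g (xs (S k))) (g (xs (S k)))
                       / tinner (g (xs k)) (g (xs k)) in
           tadd (tscal (-1) (g (retr Rt (xs k) (tscal (alphas k) (etas k)))))
                (tscal beta (sfr_transport Rt (xs k) (alphas k) (etas k))))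
          hx.

From Stdlib Require Import Reals Lra Psatz.
Open Scope R_scope.
Set Implicit Arguments.

(* Write r_k = <grad f(x_k), eta_k> / ||grad f(x_k)||^2.  We show by
   induction that r_k lies in the interval
   I = [-1/(1-c2), (2 c2 - 1)/(1-c2)], whose right end is negative since
   c2 < 1/2; descent follows at once.
   - r_0 = -1, which lies in I.
   - Expanding eta_(k+1) gives r_(k+1) = -1 + q / ||grad f(x_k)||^2 with
     q = <grad f(x_(k+1)), T^(k)(eta_k)>.  The scaled transport only ever
     shrinks T^R, so the strong Wolfe condition yields |q| <= c2 |<grad
     f(x_k), eta_k>|, i.e. |r_(k+1) + 1| <= c2 |r_k|, and r_k in I forces
     r_(k+1) in I. *)

Lemma tinner_addr (M : RiemMfd) (x : pt M) (u v w : tv M x) :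
  tinner u (tadd v w) = tinner u v + tinner u w.
Proof.
  rewrite tinner_sym, tinner_add, (tinner_sym _ _ v), (tinner_sym _ _ w).
  reflexivity.
Qed.

Lemma tinner_scalr (M : RiemMfd) (x : pt M) (a : R) (u v : tv M x) :
  tinner u (tscal a v) = a * tinner u v.
Proof. rewrite tinner_sym, tinner_scal, tinner_sym; reflexivity. Qed.

Lemma tinner_eq_rect_r (M : RiemMfd) (g : forall x, tv M x) (y1 y2 : pt M)
  (h : y1 = y2) (v : tv M y2) :
  tinner (g y1) (eq_rect_r (tv M) v h) = tinner (g y2) v.
Proof. subst; reflexivity. Qed.

(* The transport T^(k) is T^R rescaled by a factor in [0, 1], so its pairing
   with any vector is bounded by that of the differentiated retraction. *)
Lemma sfr_transport_inner_le (M : RiemMfd) (Rt : Retraction M) (x : pt M)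
  (a : R) (eta : tv M x) (w : tv M (retr Rt x (tscal a eta))) :
  Rabs (tinner w (sfr_transport Rt x a eta))
    <= Rabs (tinner w (dretr Rt x (tscal a eta) eta)).
Proof.
  unfold sfr_transport; cbv zeta.
  set (TR := dretr Rt x (tscal a eta) eta).
  destruct (Rle_dec (tnorm TR) (tnorm eta)) as [_ | hgt]; [lra |].
  apply Rnot_le_lt in hgt.
  assert (hnorm : 0 <= tnorm eta) by apply sqrt_pos.
  assert (hfactor : 0 <= tnorm eta / tnorm TR <= 1).
  { assert (e : tnorm eta / tnorm TR * tnorm TR = tnorm eta) by (field; lra).
    split; nra. }
  rewrite tinner_scalr, Rabs_mult, (Rabs_pos_eq _ (proj1 hfactor)).
  pose proof (Rabs_pos (tinner w TR)).
  nra.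
Qed.

Definition fr_interval (c2 r : R) : Prop :=
  - (1 / (1 - c2)) <= r <= (2 * c2 - 1) / (1 - c2).

Lemma fr_interval_minus_one (c2 : R) :
  0 <= c2 -> c2 < 1 -> fr_interval c2 (-1).
Proof.
  intros hc0 hc1; unfold fr_interval; split.
  - assert (e : 1 / (1 - c2) * (1 - c2) = 1) by (field; lra).
    nra.
  - assert (e : (2 * c2 - 1) / (1 - c2) = -1 + c2 / (1 - c2)) by (field; lra).
    rewrite e.
    assert (e' : c2 / (1 - c2) * (1 - c2) = c2) by (field; lra).
    nra.
Qed.

Lemma fr_interval_neg {c2 r : R} : c2 < 1/2 -> fr_interval c2 r -> r < 0.
Proof.
  intros hc [_ hr].
  enough ((2 * c2 - 1) / (1 - c2) < 0) by lra.
  apply Rdiv_neg_pos; lra.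
Qed.

Lemma fr_interval_step {c2 r s : R} :
  0 < c2 -> c2 < 1/2 -> fr_interval c2 r ->
  Rabs (s + 1) <= c2 * Rabs r -> fr_interval c2 s.
Proof.
  intros hc0 hc1 hr hs.
  pose proof (fr_interval_neg hc1 hr) as rneg.
  rewrite (Rabs_left r rneg) in hs.
  destruct hr as [hlo hhi]; unfold fr_interval.
  set (t := 1 / (1 - c2)) in *.
  assert (e : (2 * c2 - 1) / (1 - c2) = (2 * c2 - 1) * t) by (unfold t; field; lra).
  rewrite e in *.
  assert (ht : t * (1 - c2) = 1) by (unfold t; field; lra).
  pose proof (Rle_trans _ _ _ (Rle_abs (s + 1)) hs) as hs_up.
  rewrite <- Rabs_Ropp in hs.
  pose proof (Rle_trans _ _ _ (Rle_abs (- (s + 1))) hs) as hs_lo.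
  split; nra.
Qed.

Section ScaledFletcherReeves.

Variables (M : RiemMfd) (Rt : Retraction M) (f : pt M -> R)
  (g : forall x, tv M x) (c1 c2 : R)
  (xs : nat -> pt M) (etas : forall k, tv M (xs k)) (alphas : nat -> R).

Hypothesis hseq : sfr_sequence Rt f g c1 c2 xs etas alphas.
Hypothesis hnz : forall k, g (xs k) <> tzero (xs k).

Definition fr_ratio (k : nat) : R :=
  tinner (g (xs k)) (etas k) / tinner (g (xs k)) (g (xs k)).

Lemma grad_sqnorm_pos (k : nat) : 0 < tinner (g (xs k)) (g (xs k)).
Proof. apply tinner_pos, hnz. Qed.

Lemma fr_ratio_zero : fr_ratio 0 = -1.
Proof.
  unfold fr_ratio; rewrite (proj1 hseq), tinner_scalr.
  pose proof (grad_sqnorm_pos 0).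
  field; lra.
Qed.

(* Expanding eta_(k+1): r_(k+1) + 1 = q / ||grad f(x_k)||^2 where
   q = <grad f(x_(k+1)), T^(k)(eta_k)>; the curvature part of the strong
   Wolfe condition then bounds |q| by c2 |<grad f(x_k), eta_k>|. *)
Lemma fr_ratio_succ (k : nat) :
  Rabs (fr_ratio (S k) + 1) <= c2 * Rabs (fr_ratio k).
Proof.
  destruct (proj2 hseq k) as (_ & (_ & hwolfe) & hx & heta).
  pose proof (grad_sqnorm_pos k) as ha.
  pose proof (grad_sqnorm_pos (S k)) as hb.
  set (q := tinner (g (xs (S k)))
              (eq_rect_r (tv M) (sfr_transport Rt (xs k) (alphas k) (etas k)) hx)).
  assert (hq : Rabs q <= c2 * Rabs (tinner (g (xs k)) (etas k))).
  { unfold q; rewrite tinner_eq_rect_r.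
    eapply Rle_trans; [apply sfr_transport_inner_le | exact hwolfe]. }
  assert (hrec : fr_ratio (S k) + 1 = q / tinner (g (xs k)) (g (xs k))).
  { unfold fr_ratio, q; rewrite heta, !tinner_eq_rect_r; cbv zeta.
    rewrite tinner_addr, !tinner_scalr.
    assert (hgrad_succ : tinner (g (xs (S k))) (g (xs (S k)))
                  = tinner (g (retr Rt (xs k) (tscal (alphas k) (etas k))))
                           (g (retr Rt (xs k) (tscal (alphas k) (etas k)))))
      by (rewrite hx; reflexivity).
    rewrite <- hgrad_succ.
    field; lra. }
  rewrite hrec; unfold fr_ratio, Rdiv.
  rewrite !Rabs_mult, (Rabs_pos_eq (/ _)) by (left; apply Rinv_0_lt_compat, ha).
  pose proof (Rinv_0_lt_compat _ ha).
  nra.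
Qed.

Lemma fr_ratio_in_interval :
  0 < c2 -> c2 < 1/2 -> forall k, fr_interval c2 (fr_ratio k).
Proof.
  intros hc0 hc1; induction k as [| k IH].
  - rewrite fr_ratio_zero; apply fr_interval_minus_one; lra.
  - exact (fr_interval_step hc0 hc1 IH (fr_ratio_succ k)).
Qed.

End ScaledFletcherReeves.

Theorem mainTheorem3 (M : RiemMfd) (Rt : Retraction M) (f : pt M -> R)
  (g : forall x, tv M x) (hg : is_riem_grad Rt f g)
  (c1 c2 : R) (hc1 : 0 < c1) (hc12 : c1 < c2) (hc2 : c2 < 1/2)
  (xs : nat -> pt M) (etas : forall k, tv M (xs k)) (alphas : nat -> R)
  (hseq : sfr_sequence Rt f g c1 c2 xs etas alphas)
  (hnz : forall k, g (xs k) <> tzero (xs k)) :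
  forall k : nat,
    tinner (g (xs k)) (etas k) < 0 /\
    - (1 / (1 - c2)) <= tinner (g (xs k)) (etas k) / tinner (g (xs k)) (g (xs k)) /\
    tinner (g (xs k)) (etas k) / tinner (g (xs k)) (g (xs k)) <= (2 * c2 - 1) / (1 - c2).
Proof.
  intro k.
  pose proof (fr_ratio_in_interval hseq hnz ltac:(lra) hc2 k) as hint.
  split; [| exact hint].
  pose proof (fr_interval_neg hc2 hint) as hneg; unfold fr_ratio in hneg.
  pose proof (@grad_sqnorm_pos M g xs hnz k) as hpos.
  assert (e : tinner (g (xs k)) (etas k)
              = tinner (g (xs k)) (etas k) / tinner (g (xs k)) (g (xs k))
                * tinner (g (xs k)) (g (xs k))) by (field; lra).
  rewrite e; nra.
Qed.
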